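(* Let $q$ be a prime power, $\mathbb{F}_q$ the finite field with $q$ elements, and let $d$ and $k$ be fixed positive integers with $d \geqslant 2k-1$. Let $E \subset \mathbb{F}_q^d$ be such that $$|E| \gg q^{\frac{d}{2} + k - 1}.$$ Then the number of $k$-tuples of $k$ mutually orthogonal vectors in $E$ is $$(1 + o(1)) \frac{|E|^k}{k!}\, q^{-\binom{k}{2}}.$$
   Context: Two vectors $x=(x_1,\dots,x_d)$ and $y=(y_1,\dots,y_d)$ in $\mathbb{F}_q^d$ are orthogonal if $x_1y_1+\cdots+x_dy_d=0$. A ''$k$-tuple of $k$ mutually orthogonal vectors in $E$'' means an unordered collection of $k$ distinct vectors of $E$ that are pairwise orthogonal (hence the division by $k!$). Asymptotic notation is with $d,k$ fixed and $q\to\infty$: $|E| \gg f(q)$ means $|E|/f(q)\to\infty$, and $o(1)$ denotes a quantity tending to $0$. *)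

From HB Require Import structures.
From mathcomp Require Import all_boot all_order all_algebra all_field.
Set Implicit Arguments. Unset Strict Implicit. Unset Printing Implicit Defensive.
Import Order.TTheory GRing.Theory Num.Theory.
Local Open Scope ring_scope.

Definition dotv (F : finFieldType) (d : nat) (x y : 'rV[F]_d) : F :=
  \sum_(i < d) x ord0 i * y ord0 i.

Definition orthov (F : finFieldType) (d : nat) (x y : 'rV[F]_d) : bool :=
  dotv x y == 0.

Definition num_orth_ktuples (F : finFieldType) (d : nat)
    (E : {set 'rV[F]_d}) (k : nat) : nat :=
  #|[set S : {set 'rV[F]_d} | [&& S \subset E, #|S| == k &
      [forall x in S, forall y in S, (x != y) ==> orthov x y]]]|%N.

(* Let N_k(E) be the number of orthogonal k-sets in E, and E_x the set of the
   y <> x in E orthogonal to x.  Counting the pairs (x, S) with x in S gives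
   k N_k(E) = sum_(x in E) N_(k-1)(E_x), so an estimate for N_(k-1) propagates
   to N_k as soon as |E_x| is close to |E|/q on average over x in E.  This is a
   second-moment bound: for a(x, y) = [x . y = 0] - 1/q the correlation
   sum_x a(x, y) a(x, z) vanishes unless z is a nonzero multiple of y, whence
   sum_x (sum_(y in E) a(x, y))^2 <= |E| q^d and, by Cauchy-Schwarz,
   sum_(x in E) | |E_x| - |E|/q | <= 2 q^(d/2) |E|.  The induction yields
   |q^C(k,2) k! N_k(E) - |E|^k| <= c_k L (|E| + L)^(k-1) with
   L = 2 q^(d/2) q^(k-1), which is o(|E|^k) when |E| >> L.  The hypothesis
   d >= 2k - 1 only guarantees that such sets E exist. *)

From Pilot Require Import Defs.
From HB Require Import structures.
From mathcomp Require Import all_boot all_order all_algebra all_field.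
From mathcomp Require Import ring lra.
Set Implicit Arguments. Unset Strict Implicit. Unset Printing Implicit Defensive.
Import Order.TTheory GRing.Theory Num.Theory.
(* Re-import so that [orthov] denotes the definition of Defs rather than the
   sesquilinear-form notion of the same name from mathcomp. *)
Import Defs.
Local Open Scope ring_scope.

Section DotProduct.

Variables (F : finFieldType) (d : nat).
Implicit Types (x y z w : 'rV[F]_d).

Lemma dotvC x y : dotv x y = dotv y x.
Proof. by apply: eq_bigr => i _; rewrite mulrC. Qed.

Lemma orthovC x y : orthov x y = orthov y x.
Proof. by rewrite /orthov dotvC. Qed.

Lemma dotvDl x y z : dotv (x + y) z = dotv x z + dotv y z.
Proof. by rewrite /dotv -big_split /=; apply: eq_bigr => i _; rewrite mxE mulrDl. Qed.

Lemma dotvZl (c : F) x z : dotv (c *: x) z = c * dotv x z.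
Proof. by rewrite /dotv mulr_sumr; apply: eq_bigr => i _; rewrite mxE mulrA. Qed.

Lemma dotvBl x y z : dotv (x - y) z = dotv x z - dotv y z.
Proof. by rewrite dotvDl -scaleN1r dotvZl mulN1r. Qed.

Lemma dotvZr (c : F) x z : dotv x (c *: z) = c * dotv x z.
Proof. by rewrite dotvC dotvZl dotvC. Qed.

Lemma dotv0r x : dotv x 0 = 0.
Proof. by rewrite -(scale0r 0) dotvZr mul0r. Qed.

Lemma dotv_delta_mx (j : 'I_d) y : dotv (delta_mx ord0 j) y = y ord0 j.
Proof.
rewrite /dotv (bigD1 j) //= big1 => [|i /negbTE nij]; first by rewrite mxE !eqxx mul1r addr0.
by rewrite mxE nij andbF mul0r.
Qed.

Lemma rV_neq0_coord y : y != 0 -> exists i, y ord0 i != 0.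
Proof.
move=> ny; apply/existsP; apply: contraR ny; rewrite negb_exists => /forallP y0.
by apply/eqP/rowP => i; rewrite mxE; apply/eqP/negPn/y0.
Qed.

Lemma exists_dotv1 y : y != 0 -> exists w, dotv w y = 1.
Proof.
move=> /rV_neq0_coord [i yi]; exists ((y ord0 i)^-1 *: delta_mx ord0 i).
by rewrite dotvZl dotv_delta_mx mulVf.
Qed.

Lemma collinear_or_dotv_separated y z :
  (exists2 c, c != 0 & z = c *: y) \/
  (exists w, dotv w y = 1 /\ dotv w z = 0) \/
  (exists w, dotv w y = 0 /\ dotv w z = 1).
Proof.
have [-> | ny] := eqVneq y 0.
  have [-> | nz] := eqVneq z 0; first by left; exists 1; rewrite ?oner_neq0 ?scaler0.
  by right; right; have [w wz] := exists_dotv1 nz; exists w; rewrite dotv0r.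
have [i yi] := rV_neq0_coord ny; set c := z ord0 i / y ord0 i.
have [z'0 | nz'] := eqVneq (z - c *: y) 0.
  have ez : z = c *: y by apply/eqP; rewrite -subr_eq0 z'0.
  have [c0 | nc0] := eqVneq c 0; last by left; exists c.
  right; left; have [w wy] := exists_dotv1 ny; exists w.
  by rewrite ez c0 scale0r dotv0r.
have [j zj] := rV_neq0_coord nz'; right; right.
exists (((z - c *: y) ord0 j)^-1 *: (delta_mx ord0 j - (y ord0 j / y ord0 i) *: delta_mx ord0 i)).
rewrite !dotvZl !dotvBl !dotvZl !dotv_delta_mx divfK // subrr mulr0; split => //.
have -> : z ord0 j - y ord0 j / y ord0 i * z ord0 i = (z - c *: y) ord0 j.
  by rewrite !mxE /c; field.
exact: mulVf.
Qed.

End DotProduct.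

Section OrthogonalSets.

Variables (F : finFieldType) (d : nat).
Implicit Types (E S : {set 'rV[F]_d}) (x y : 'rV[F]_d).

Definition pairwise_orth S := [forall x in S, forall y in S, (x != y) ==> orthov x y].

Definition orth_ksets E k :=
  [set S : {set 'rV[F]_d} | [&& S \subset E, #|S| == k & pairwise_orth S]].

Definition orth_nbhd E x := [set y in E | orthov x y & y != x].

Lemma num_orth_ktuplesE E k : num_orth_ktuples E k = #|orth_ksets E k|.
Proof. by []. Qed.

Lemma pairwise_orthP S x y :
  pairwise_orth S -> x \in S -> y \in S -> x != y -> orthov x y.
Proof.
move=> /forall_inP orthS xS yS; apply/implyP.
by move/forall_inP: (orthS x xS); apply.
Qed.

Lemma orth_ksets_containing E k x : x \in E ->
  [set S in orth_ksets E k.+1 | x \in S] = (fun S => x |: S) @: orth_ksets (orth_nbhd E x) k.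
Proof.
move=> xE; have xnN : x \notin orth_nbhd E x by rewrite inE eqxx !andbF.
apply/setP => S; rewrite !inE; apply/idP/imsetP.
  case/andP => /and3P [SE /eqP cS orthS] xS.
  exists (S :\ x); last by rewrite setD1K.
  rewrite inE; apply/and3P; split.
  - apply/subsetP => y; rewrite !inE => /andP [yx yS].
    by rewrite (subsetP SE) // yx andbT (pairwise_orthP orthS xS yS) // eq_sym.
  - by move: cS; rewrite (cardsD1 x S) xS add1n => -[->].
  - apply/forall_inP => a /setD1P [_ aS]; apply/forall_inP => b /setD1P [_ bS].
    by apply/implyP; apply: pairwise_orthP aS bS.
case=> S' /[!inE] /and3P [S'N /eqP cS' orthS'] ->.
have S'E y : y \in S' -> [/\ y \in E, orthov x y & y != x].
  by move/(subsetP S'N); rewrite inE => /and3P.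
rewrite setU11 andbT; apply/and3P; split.
- by rewrite subUset sub1set xE; apply/subsetP => y /S'E [].
- have xS' : x \notin S' by apply: contraNN xnN; apply: (subsetP S'N).
  by rewrite cardsU1 xS' cS'.
apply/forallP => a; apply/implyP; rewrite !inE => /orP [/eqP -> | aS];
  apply/forallP => b; apply/implyP; rewrite !inE => /orP [/eqP -> | bS].
- by rewrite eqxx.
- by have [_ -> _] := S'E b bS; rewrite implybT.
- by have [_ + _] := S'E a aS; rewrite orthovC => ->; rewrite implybT.
- by apply/implyP; apply: pairwise_orthP aS bS.
Qed.

Lemma card_orth_ksets_containing E k x : x \in E ->
  #|[set S in orth_ksets E k.+1 | x \in S]| = num_orth_ktuples (orth_nbhd E x) k.
Proof.
move=> xE; rewrite orth_ksets_containing // card_in_imset // => S1 S2.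
have notin S : S \in orth_ksets (orth_nbhd E x) k -> x \notin S.
  rewrite inE => /and3P [SN _ _]; apply/negP => /(subsetP SN).
  by rewrite inE eqxx !andbF.
by move=> /notin x1 /notin x2 e; rewrite -(setU1K x1) -(setU1K x2) e.
Qed.

Lemma num_orth_ktuplesS E k :
  (k.+1 * num_orth_ktuples E k.+1 =
   \sum_(x in E) num_orth_ktuples (orth_nbhd E x) k)%N.
Proof.
rewrite -(eq_bigr _ (fun x => @card_orth_ksets_containing E k x)).
under eq_bigr => x _ do rewrite -sum1dep_card big_mkcondr /=.
rewrite exchange_big /= num_orth_ktuplesE mulnC -sum_nat_const; apply: eq_bigr => S.
rewrite inE => /and3P [SE /eqP cS _].
rewrite -big_mkcondr /= -cS -sum1_card; apply: eq_bigl => y.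
by rewrite andb_idl // => /(subsetP SE).
Qed.

Lemma num_orth_ktuples0 E : num_orth_ktuples E 0 = 1%N.
Proof.
rewrite num_orth_ktuplesE (_ : orth_ksets E 0 = [set set0]) ?cards1 //.
apply/setP => S; rewrite !inE; apply/idP/eqP => [/and3P [_ /eqP /cards0_eq //] | ->].
by rewrite sub0set cards0 eqxx; apply/forall_inP => x; rewrite inE.
Qed.

Lemma num_orth_ktuples1 E : num_orth_ktuples E 1 = #|E|.
Proof.
have := num_orth_ktuplesS E 0; rewrite mul1n => ->.
by rewrite (eq_bigr (fun _ => 1%N)) ?sum1_card // => x _; rewrite num_orth_ktuples0.
Qed.

End OrthogonalSets.

Section OrthogonalityDeviation.

Variables (R : realFieldType) (F : finFieldType) (d : nat).
Implicit Types (x y z w : 'rV[F]_d) (E : {set 'rV[F]_d}).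
Local Notation q := (#|F|%:R : R).

Lemma card_ff_gt0 : 0 < q.
Proof. by rewrite ltr0n (ltnW (card_finNzRing_gt1 F)). Qed.

Lemma card_ff_neq0 : q != 0.
Proof. by rewrite gt_eqF // card_ff_gt0. Qed.

Lemma card_ff_ge1 : 1 <= q.
Proof. by rewrite ler1n (ltnW (card_finNzRing_gt1 F)). Qed.

Lemma sum_rV_const (a : R) : \sum_(x : 'rV[F]_d) a = a * q ^+ d.
Proof. by rewrite sumr_const card_mx mul1n -[a *+ _]mulr_natr natrX. Qed.

Definition orth_dev x y : R := (orthov x y)%:R - q^-1.

Definition orth_corr y z : R := \sum_x orth_dev x y * orth_dev x z.

(* Along each line x + F w, the products x . y run once through F. *)
Lemma sum_orth_dev_invariant y w (h : 'rV[F]_d -> R) :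
  dotv w y = 1 -> (forall x (c : F), h (x + c *: w) = h x) ->
  \sum_x orth_dev x y * h x = 0.
Proof.
move=> wy hw; set G := fun x => orth_dev x y * h x.
have shift (c : F) : \sum_x G x = \sum_x G (x + c *: w).
  by rewrite (reindex_inj (addIr (c *: w))).
have line_sum x : \sum_(c : F) G (x + c *: w) = 0.
  rewrite (eq_bigr (fun c => ((dotv x y + c == 0)%:R - q^-1) * h x)); last first.
    by move=> c _; rewrite /G /orth_dev /orthov hw dotvDl dotvZl wy mulr1.
  rewrite -mulr_suml sumrB sumr_const -[q^-1 *+ _]mulr_natr mulVf ?card_ff_neq0 //.
  rewrite (bigD1 (- dotv x y)) //= addrN eqxx big1 ?addr0 ?subrr ?mul0r // => c nc.
  by rewrite addrC addr_eq0 (negbTE nc).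
apply: (mulfI card_ff_neq0); rewrite mulr0.
have -> : q * \sum_x G x = \sum_(c : F) \sum_x G (x + c *: w).
  by rewrite -(eq_bigr _ (fun c _ => shift c)) sumr_const mulr_natl.
by rewrite exchange_big /= big1.
Qed.

Lemma orth_corrC y z : orth_corr y z = orth_corr z y.
Proof. by apply: eq_bigr => x _; rewrite mulrC. Qed.

Lemma orth_corr_separated y z w : dotv w y = 1 -> dotv w z = 0 -> orth_corr y z = 0.
Proof.
move=> wy wz; apply: sum_orth_dev_invariant wy _ => x c.
by rewrite /orth_dev /orthov dotvDl dotvZl wz mulr0 addr0.
Qed.

Lemma orth_corrZr y z (c : F) : c != 0 -> orth_corr y (c *: z) = orth_corr y z.
Proof. by move=> c0; apply: eq_bigr => x _; rewrite /orth_dev /orthov dotvZr mulf_eq0 (negbTE c0). Qed.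

Lemma orth_corr_ge0 y : 0 <= orth_corr y y.
Proof. by rewrite sumr_ge0 // => x _; rewrite -expr2 sqr_ge0. Qed.

Lemma orth_corr00_le : orth_corr 0 0 <= q ^+ d.
Proof.
rewrite /orth_corr (eq_bigr (fun=> (1 - q^-1) ^+ 2)) => [|x _]; last first.
  by rewrite /orth_dev /orthov dotv0r eqxx expr2.
rewrite sum_rV_const -[leRHS]mul1r ler_wpM2r ?exprn_ge0 ?ler0n //.
have : 0 <= q^-1 <= 1 by rewrite invr_ge0 ler0n invf_le1 ?card_ff_gt0 ?card_ff_ge1.
by move: q^-1 => a /andP [a0 a1]; nra.
Qed.

Lemma orth_corr_diag_le y : y != 0 -> q * orth_corr y y <= q ^+ d.
Proof.
move=> /exists_dotv1 [w wy].
have dev_sum0 : \sum_x orth_dev x y = 0.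
  rewrite -[RHS](@sum_orth_dev_invariant y w (fun=> 1)) //.
  by apply: eq_bigr => x _; rewrite mulr1.
have orth_count : \sum_x ((orthov x y)%:R : R) = q ^+ d / q.
  move: dev_sum0; rewrite /orth_dev sumrB sum_rV_const.
  by move/eqP; rewrite subr_eq0 mulrC => /eqP.
have -> : orth_corr y y = (1 - q^-1) * \sum_x ((orthov x y)%:R : R).
  rewrite /orth_corr (eq_bigr (fun x => (1 - q^-1) * (orthov x y)%:R - q^-1 * orth_dev x y)).
    by rewrite sumrB -!mulr_sumr dev_sum0 mulr0 subr0.
  by move=> x _; rewrite /orth_dev; case: (orthov x y) => /=; ring.
rewrite orth_count mulrCA [q * _]mulrC divfK ?card_ff_neq0 //.
rewrite -[leRHS]mul1r ler_wpM2r ?exprn_ge0 ?ler0n //.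
by rewrite lerBlDr lerDl invr_ge0 ler0n.
Qed.

Lemma orth_corr_le_line y z :
  orth_corr y z <= (z \in [set c *: y | c in [set~ 0]])%:R * orth_corr y y.
Proof.
case: (collinear_or_dotv_separated y z) => [[c c0 ->] | [[w [wy wz]] | [w [wy wz]]]].
- have cy : c *: y \in [set c *: y | c in [set~ 0]] by apply/imsetP; exists c; rewrite ?inE.
  by rewrite orth_corrZr // cy mul1r.
- by rewrite (orth_corr_separated wy wz) mulr_ge0 ?orth_corr_ge0.
- by rewrite orth_corrC (orth_corr_separated wz wy) mulr_ge0 ?orth_corr_ge0.
Qed.

Lemma sum_orth_corr_le E y : \sum_(z in E) orth_corr y z <= q ^+ d.
Proof.
set L := [set c *: y | c in [set~ 0]].
apply: le_trans (_ : \sum_z (z \in L)%:R * orth_corr y y <= _).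
  rewrite [leRHS](bigID (mem E)) /= -[leLHS]addr0 lerD ?sumr_ge0 //.
    by apply: ler_sum => z _; apply: orth_corr_le_line.
  by move=> z _; rewrite mulr_ge0 ?orth_corr_ge0.
rewrite -mulr_suml.
have -> : \sum_z ((z \in L)%:R : R) = #|L|%:R.
  by rewrite -sum1_card natr_sum [RHS]big_mkcond; apply: eq_bigr => z _; case: (z \in L).
have [y0 | ny] := eqVneq y 0.
  have -> : L = [set 0].
    apply/setP => z; rewrite /L y0 inE; apply/imsetP/eqP => [[c _ ->] | ->]; first exact: scaler0.
    by exists 1; rewrite ?inE ?oner_neq0 ?scaler0.
  by rewrite cards1 mul1r y0 orth_corr00_le.
apply: le_trans (orth_corr_diag_le ny); rewrite ler_wpM2r ?orth_corr_ge0 // ler_nat.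
by apply: leq_trans (leq_imset_card _ _) _; rewrite cardsC1 leq_pred.
Qed.

Lemma sum_sqr_orth_dev_le E :
  \sum_x (\sum_(y in E) orth_dev x y) ^+ 2 <= #|E|%:R * q ^+ d.
Proof.
have -> : \sum_x (\sum_(y in E) orth_dev x y) ^+ 2 = \sum_(y in E) \sum_(z in E) orth_corr y z.
  under eq_bigr => x _ do rewrite expr2 big_distrlr /=.
  by rewrite exchange_big; apply: eq_bigr => y _; rewrite exchange_big.
apply: le_trans (_ : \sum_(y in E) q ^+ d <= _).
  by apply: ler_sum => y _; apply: sum_orth_corr_le.
by rewrite sumr_const mulr_natl.
Qed.

Lemma card_orth_nbhd_dev_le E x :
  `|#|orth_nbhd E x|%:R - #|E|%:R / q| <= `|\sum_(y in E) orth_dev x y| + 1.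
Proof.
set O := [set y in E | orthov x y].
have -> : orth_nbhd E x = O :\ x.
  by apply/setP => y; rewrite !inE; case: (y == x); rewrite ?andbF ?andbT.
have cardO : (#|O|%:R : R) = \sum_(y in E) (orthov x y)%:R.
  rewrite -sum1_card natr_sum big_mkcond [RHS]big_mkcond; apply: eq_bigr => y _.
  by rewrite inE; case: (y \in E); case: (orthov x y).
have -> : (#|O :\ x|%:R : R) - #|E|%:R / q = \sum_(y in E) orth_dev x y - (x \in O)%:R.
  rewrite /orth_dev sumrB sumr_const -cardO -mulr_natl (cardsD1 x O) natrD; ring.
apply: le_trans (ler_normB _ _) _; apply: lerD => //.
by case: (_ \in _); rewrite ?normr1 ?normr0 ?ler01.
Qed.

End OrthogonalityDeviation.

Section OrthNbhdMoment.

Variables (R : rcfType) (F : finFieldType) (d : nat) (E : {set 'rV[F]_d}).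
Local Notation q := (#|F|%:R : R).
Local Notation mu := (Num.sqrt q ^+ d).

Lemma sqrt_card_ff_pow_ge1 : 1 <= mu.
Proof. by rewrite exprn_ege1 // -[leLHS]sqrtr1 ler_sqrt ?ler0n // card_ff_ge1. Qed.

Lemma sum_abs_orth_dev_le :
  \sum_(x in E) `|\sum_(y in E) orth_dev R x y| <= mu * #|E|%:R.
Proof.
set g := fun x => \sum_(y in E) orth_dev R x y; set s : R := #|E|%:R.
have mu_gt0 : 0 < mu by apply: lt_le_trans sqrt_card_ff_pow_ge1.
have mu2 : mu ^+ 2 = q ^+ d by rewrite -exprAC sqr_sqrtr ?ler0n.
have amgm x : 2 * mu * `|g x| <= g x ^+ 2 + mu ^+ 2.
  rewrite -(real_normK (num_real (g x))).
  by have := sqr_ge0 (`|g x| - mu); move: `|g x| => a; rewrite !expr2; nra.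
have sum_sqr : \sum_(x in E) g x ^+ 2 <= s * mu ^+ 2.
  rewrite mu2; apply: le_trans (sum_sqr_orth_dev_le R E).
  by rewrite [leRHS](bigID (mem E)) /= lerDl sumr_ge0 // => x _; rewrite sqr_ge0.
have : \sum_(x in E) 2 * mu * `|g x| <= \sum_(x in E) (g x ^+ 2 + mu ^+ 2).
  by apply: ler_sum => x _; apply: amgm.
rewrite -mulr_sumr big_split /= sumr_const -mulr_natl -/s.
by move: (\sum_(x in E) _) (\sum_(x in E) _) sum_sqr => A B; nra.
Qed.

Lemma sum_orth_nbhd_dev_le :
  \sum_(x in E) `|#|orth_nbhd E x|%:R - #|E|%:R / q| <= 2 * mu * #|E|%:R.
Proof.
apply: le_trans (_ : \sum_(x in E) (`|\sum_(y in E) orth_dev R x y| + 1) <= _).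
  by apply: ler_sum => x _; apply: card_orth_nbhd_dev_le.
rewrite big_split /= sumr_const -mulr_natl mulr1.
have := sum_abs_orth_dev_le; have := sqrt_card_ff_pow_ge1.
by have : 0 <= (#|E|%:R : R) by []; move: (#|E|%:R : R) mu (\sum_(x in E) _) => s m A; nra.
Qed.

End OrthNbhdMoment.

Section PowerSums.

Variable R : realFieldType.

Lemma normr_subXS_le (a b s : R) n : 0 <= a -> 0 <= b -> a <= s -> b <= s ->
  `|a ^+ n.+1 - b ^+ n.+1| <= n.+1%:R * `|a - b| * s ^+ n.
Proof.
move=> a0 b0 a_s b_s; elim: n => [|n IHn]; first by rewrite !expr1 expr0 mulr1 mul1r.
have s0 : 0 <= s by apply: le_trans a_s.
have -> : a ^+ n.+2 - b ^+ n.+2 = a * (a ^+ n.+1 - b ^+ n.+1) + (a - b) * b ^+ n.+1.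
  by rewrite !exprS; ring.
have -> : n.+2%:R * `|a - b| * s ^+ n.+1 =
          s * (n.+1%:R * `|a - b| * s ^+ n) + `|a - b| * s ^+ n.+1.
  by rewrite -[n.+2]addn1 natrD exprS; ring.
apply: le_trans (ler_normD _ _) _.
rewrite !normrM (ger0_norm a0) (ger0_norm (exprn_ge0 _ b0)).
apply: lerD; first by apply: ler_pM.
by rewrite ler_wpM2l // lerXn2r.
Qed.

Lemma exprD_le (a b : R) n : 0 <= a -> 0 <= b -> (a + b) ^+ n <= 2 ^+ n * (a ^+ n + b ^+ n).
Proof.
wlog ab : a b / a <= b => [hwlog a0 b0|a0 b0].
  by case: (leP a b) => [|/ltW] ab; [|rewrite addrC [a ^+ n + _]addrC]; apply: hwlog.
apply: le_trans (_ : (2 * b) ^+ n <= _).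
  by rewrite lerXn2r ?nnegrE //; lra.
by rewrite exprMn ler_wpM2l ?exprn_ge0 // lerDr exprn_ge0.
Qed.

(* The induction step of the count, abstracted: t x stands for |E_x| and X x for
   the normalised number of orthogonal (n+1)-sets in E_x. *)
Variables (I : finType) (E : {set I}) (q La : R) (n : nat) (t : I -> R).
Hypotheses (q_ge1 : 1 <= q) (La_ge0 : 0 <= La).
Hypothesis t_bound : forall x, x \in E -> 0 <= t x <= #|E|%:R.
Hypothesis t_dev : \sum_(x in E) `|t x - #|E|%:R / q| <= La * #|E|%:R.
Local Notation s := (#|E|%:R : R).
Local Notation L := (La * q ^+ n.+1).

Let q_gt0 : 0 < q. Proof. exact: lt_le_trans ltr01 q_ge1. Qed.
Let L_ge0 : 0 <= L. Proof. by rewrite mulr_ge0 // exprn_ge0 // ltW. Qed.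

Let t_dev_le x : x \in E -> `|t x - s / q| <= s.
Proof.
move=> /t_bound /andP [t0 ts]; have sq0 : 0 <= s / q by rewrite divr_ge0 // ltW.
have : s / q <= s by rewrite ler_pdivrMr // ler_peMr.
by move=> sqs; rewrite ler_norml; apply/andP; split; lra.
Qed.

Lemma sum_powdev_le :
  q ^+ n.+1 * \sum_(x in E) `|t x ^+ n.+1 - (s / q) ^+ n.+1| <= n.+1%:R * L * (s + L) ^+ n.+1.
Proof.
have sq0 : 0 <= s / q by rewrite divr_ge0 // ltW.
have sqs : s / q <= s by rewrite ler_pdivrMr // ler_peMr.
apply: le_trans (_ : q ^+ n.+1 * (n.+1%:R * s ^+ n * (La * s)) <= _).
  rewrite ler_pM2l ?exprn_gt0 //.
  apply: le_trans (_ : \sum_(x in E) n.+1%:R * s ^+ n * `|t x - s / q| <= _).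
    apply: ler_sum => x xE; have /andP [t0 ts] := t_bound xE.
    by rewrite mulrAC normr_subXS_le.
  by rewrite -mulr_sumr ler_wpM2l ?mulr_ge0 ?exprn_ge0.
have -> : q ^+ n.+1 * (n.+1%:R * s ^+ n * (La * s)) = n.+1%:R * L * s ^+ n.+1.
  by rewrite [s ^+ n.+1]exprS; ring.
apply: ler_wpM2l; first by rewrite mulr_ge0.
by rewrite lerXn2r ?nnegrE ?addr_ge0 // lerDl.
Qed.

Lemma sum_absdevX_le : q ^+ n * \sum_(x in E) `|t x - s / q| ^+ n <= (s + L) ^+ n.+1.
Proof.
case: n => [|m].
  rewrite expr0 mul1r (eq_bigr (fun=> 1)) => [|x _]; last by rewrite expr0.
  by rewrite sumr_const expr1 -mulr_natl mulr1 lerDl mulr_ge0 // exprn_ge0 // ltW.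
apply: le_trans (_ : q ^+ m.+1 * (s ^+ m * (La * s)) <= _).
  rewrite ler_pM2l ?exprn_gt0 //.
  apply: le_trans (_ : \sum_(x in E) s ^+ m * `|t x - s / q| <= _).
    apply: ler_sum => x xE; rewrite exprSr ler_wpM2r //.
    by rewrite lerXn2r ?nnegrE ?t_dev_le.
  by rewrite -mulr_sumr ler_wpM2l ?exprn_ge0.
have -> : q ^+ m.+1 * (s ^+ m * (La * s)) = La * q ^+ m.+1 * s ^+ m.+1.
  by rewrite [s ^+ m.+1]exprSr; ring.
have q0 := ltW q_gt0.
rewrite [(_ + _) ^+ _]exprS; apply: ler_pM; rewrite ?mulr_ge0 ?exprn_ge0 //.
  apply: le_trans (_ : La * q ^+ m.+2 <= _); last by rewrite lerDr.
  by rewrite ler_wpM2l // [q ^+ m.+2]exprS ler_peMl ?exprn_ge0.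
have Lm0 : 0 <= La * q ^+ m.+2 by rewrite mulr_ge0 ?exprn_ge0.
by rewrite lerXn2r ?nnegrE ?addr_ge0 ?ler0n ?lerDl.
Qed.

Lemma sum_shiftX_le :
  q ^+ n.+1 * \sum_(x in E) La * q ^+ n * (t x + La * q ^+ n) ^+ n
    <= 2 ^+ n.+1 * L * (s + L) ^+ n.+1.
Proof.
set u := s / q; set A := u + La * q ^+ n.
have q0 := ltW q_gt0.
have Lq0 : 0 <= La * q ^+ n by rewrite mulr_ge0 ?exprn_ge0.
have u0 : 0 <= u by rewrite divr_ge0 ?ler0n.
have A0 : 0 <= A by rewrite addr_ge0.
have qA : q * A = s + L by rewrite /A /u exprS; field; rewrite gt_eqF.
have shiftX_le x : x \in E -> (t x + La * q ^+ n) ^+ n <= 2 ^+ n * (A ^+ n + `|t x - u| ^+ n).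
  move=> xE; have /andP [t0 _] := t_bound xE.
  apply: le_trans (exprD_le n A0 (normr_ge0 (t x - u))).
  rewrite lerXn2r ?nnegrE ?addr_ge0 //.
  by have := ler_norm (t x - u); rewrite /A; lra.
apply: le_trans (_ : q ^+ n.+1 * (La * q ^+ n *
                       (2 ^+ n * (s * A ^+ n + \sum_(x in E) `|t x - u| ^+ n))) <= _).
  rewrite ler_pM2l ?exprn_gt0 // -mulr_sumr; apply: ler_wpM2l => //.
  apply: le_trans (ler_sum _ shiftX_le) _.
  by rewrite -mulr_sumr big_split /= sumr_const -[A ^+ n *+ _]mulr_natl.
have -> : q ^+ n.+1 * (La * q ^+ n * (2 ^+ n * (s * A ^+ n + \sum_(x in E) `|t x - u| ^+ n)))
    = 2 ^+ n * L * (s * (q * A) ^+ n + q ^+ n * \sum_(x in E) `|t x - u| ^+ n).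
  by rewrite exprMn exprS; ring.
have -> : 2 ^+ n.+1 * L * (s + L) ^+ n.+1 = 2 ^+ n * L * (2 * (s + L) ^+ n.+1).
  by rewrite exprS; ring.
apply: ler_wpM2l; first by rewrite mulr_ge0 ?exprn_ge0.
rewrite qA [leRHS]mulr_natl mulr2n; apply: lerD; last exact: sum_absdevX_le.
by rewrite [(s + L) ^+ n.+1]exprS ler_wpM2r ?exprn_ge0 ?addr_ge0 ?ler0n ?lerDl.
Qed.

Lemma sum_pow_approx (X : I -> R) (c : R) : 0 <= c ->
  (forall x, x \in E ->
     `|X x - t x ^+ n.+1| <= c * (La * q ^+ n) * (t x + La * q ^+ n) ^+ n) ->
  `|q ^+ n.+1 * \sum_(x in E) X x - s ^+ n.+2|
    <= (n.+1%:R + c * 2 ^+ n.+1) * L * (s + L) ^+ n.+1.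
Proof.
move=> c0 X_approx; set u := s / q.
have qn0 : 0 <= q ^+ n.+1 by rewrite exprn_ge0 // ltW.
have mean_term : q ^+ n.+1 * \sum_(x in E) u ^+ n.+1 = s ^+ n.+2.
  rewrite sumr_const -[_ *+ _]mulr_natl /u expr_div_n [s ^+ n.+2]exprS; field.
  by rewrite expf_neq0 // gt_eqF.
have -> : q ^+ n.+1 * \sum_(x in E) X x - s ^+ n.+2 =
    q ^+ n.+1 * \sum_(x in E) (X x - t x ^+ n.+1) +
    q ^+ n.+1 * \sum_(x in E) (t x ^+ n.+1 - u ^+ n.+1).
  by rewrite !sumrB -mean_term; ring.
apply: le_trans (ler_normD _ _) _; rewrite !normrM (ger0_norm qn0) mulrDl mulrDl addrC.
apply: lerD.
  apply: le_trans sum_powdev_le; rewrite ler_wpM2l //; exact: ler_norm_sum.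
apply: le_trans (_ : c * (q ^+ n.+1 * \sum_(x in E) La * q ^+ n * (t x + La * q ^+ n) ^+ n) <= _).
  rewrite mulrCA ler_wpM2l // mulr_sumr; apply: le_trans (ler_norm_sum _ _ _) _.
  by apply: ler_sum => x xE; rewrite mulrA X_approx.
by rewrite -mulrA -mulrA ler_wpM2l // mulrA sum_shiftX_le.
Qed.

End PowerSums.

Lemma rel_error_le (R : realFieldType) (A s c L eps : R) (m : nat) :
  0 < s -> 0 <= c -> 0 <= L -> 0 < eps -> (1 + c * 2 ^+ m / eps) * L <= s ->
  `|A - s ^+ m.+1| <= c * L * (s + L) ^+ m -> `|A / s ^+ m.+1 - 1| <= eps.
Proof.
move=> s0 c0 L0 eps0 Ls errA; have s_ge0 := ltW s0.
have c2m0 : 0 <= c * 2 ^+ m / eps by rewrite divr_ge0 ?mulr_ge0 ?exprn_ge0 // ltW.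
have L_le_s : L <= s by move: Ls; nra.
have cL_le : c * L * 2 ^+ m <= eps * s.
  have -> : c * L * 2 ^+ m = eps * (c * 2 ^+ m / eps * L) by field; rewrite gt_eqF.
  by rewrite ler_wpM2l ?ltW //; move: Ls; nra.
have sm0 : 0 < s ^+ m.+1 by rewrite exprn_gt0.
have -> : A / s ^+ m.+1 - 1 = (A - s ^+ m.+1) / s ^+ m.+1 by field; rewrite lt0r_neq0.
rewrite normrM normfV (gtr0_norm sm0) ler_pdivrMr // (le_trans errA) //.
apply: le_trans (_ : c * L * (2 ^+ m * s ^+ m) <= _).
  by rewrite ler_wpM2l ?mulr_ge0 // -exprMn lerXn2r ?nnegrE ?addr_ge0 ?mulr_ge0 //; lra.
rewrite mulrA [s ^+ m.+1]exprS mulrA; apply: ler_wpM2r cL_le.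
exact: exprn_ge0.
Qed.

Lemma num_orth_ktuples_error_le (R : rcfType) (d m : nat) : exists2 c : R, 0 <= c &
  forall (F : finFieldType) (E : {set 'rV[F]_d}),
  `|(#|F|%:R : R) ^+ 'C(m.+1, 2) * (m.+1)`!%:R * (num_orth_ktuples E m.+1)%:R - #|E|%:R ^+ m.+1|
    <= c * (2 * Num.sqrt (#|F|%:R : R) ^+ d * #|F|%:R ^+ m)
         * (#|E|%:R + 2 * Num.sqrt (#|F|%:R : R) ^+ d * #|F|%:R ^+ m) ^+ m.
Proof.
elim: m => [|m [c c0 IHm]].
  exists 0 => // F E; rewrite num_orth_ktuples1 bin_small // expr0 mul1r.
  by rewrite (_ : 1`! = 1%N) // mul1r expr1 subrr normr0 !mul0r.
exists (m.+1%:R + c * 2 ^+ m.+1) => [|F E]; first by rewrite addr_ge0 ?mulr_ge0 ?exprn_ge0.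
set q := (#|F|%:R : R); set La := 2 * Num.sqrt q ^+ d.
have La0 : 0 <= La by rewrite mulr_ge0 ?exprn_ge0 ?sqrtr_ge0.
have -> : q ^+ 'C(m.+2, 2) * (m.+2)`!%:R * (num_orth_ktuples E m.+2)%:R =
    q ^+ m.+1 * \sum_(x in E)
      q ^+ 'C(m.+1, 2) * (m.+1)`!%:R * (num_orth_ktuples (orth_nbhd E x) m.+1)%:R.
  rewrite -mulr_sumr -natr_sum -num_orth_ktuplesS binS bin1 exprD factS !natrM; ring.
apply: (sum_pow_approx (t := fun x => (#|orth_nbhd E x|%:R : R))) => //.
- exact: card_ff_ge1.
- move=> x _; rewrite ler0n ler_nat subset_leq_card //.
  by apply/subsetP => y; rewrite inE => /andP [].
- exact: sum_orth_nbhd_dev_le.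
- by move=> x _; apply: IHm.
Qed.

Theorem theorem2 (R : rcfType) (d k : nat) :
  (0 < k)%N -> (2 * k - 1 <= d)%N ->
  forall eps : R, 0 < eps ->
  exists (C : R) (Q : nat),
    forall (F : finFieldType) (E : {set 'rV[F]_d}),
      (Q <= #|F|)%N ->
      C * (Num.sqrt (#|F|%:R : R)) ^+ d * (#|F|%:R : R) ^+ (k - 1)
        <= (#|E|%:R : R) ->
      `| (num_orth_ktuples E k)%:R
           / ((#|E|%:R : R) ^+ k / (k`!)%:R / (#|F|%:R : R) ^+ 'C(k, 2))
         - 1 | <= eps.
Proof.
case: k => [//|m] _ _ eps eps_gt0.
have [c c_ge0 error_le] := num_orth_ktuples_error_le R d m.
exists (2 + 2 * c * 2 ^+ m / eps), 0%N => F E _; rewrite subSS subn0.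
set q := (#|F|%:R : R); set s := (#|E|%:R : R); set mu := Num.sqrt q ^+ d => E_large.
have scale_ge1 : 1 <= mu * q ^+ m.
  by apply: mulr_ege1; [apply: sqrt_card_ff_pow_ge1 | apply/exprn_ege1/card_ff_ge1].
have C_ge2 : 2 <= 2 + 2 * c * 2 ^+ m / eps.
  by rewrite lerDl divr_ge0 ?mulr_ge0 ?exprn_ge0 // ltW.
have s_gt0 : 0 < s by move: E_large; rewrite -mulrA; nra.
have -> : (num_orth_ktuples E m.+1)%:R / (s ^+ m.+1 / (m.+1)`!%:R / q ^+ 'C(m.+1, 2)) - 1
    = q ^+ 'C(m.+1, 2) * (m.+1)`!%:R * (num_orth_ktuples E m.+1)%:R / s ^+ m.+1 - 1.
  by field; rewrite !expf_neq0 ?lt0r_neq0 ?card_ff_gt0 //= ltr0n fact_gt0.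
apply: rel_error_le (error_le F E) => //.
  by rewrite !mulr_ge0 ?exprn_ge0 ?sqrtr_ge0 ?ler0n.
rewrite -/q -/mu (_ : _ * (2 * mu * q ^+ m) = (2 + 2 * c * 2 ^+ m / eps) * mu * q ^+ m) //.
by field; rewrite gt_eqF.
Qed.
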